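(* Let $(G,\cdot)$ be a semigroup, $(G,\curlywedge)$ a semilattice on $G$ with order $\zeta$ ($x\leqslant y$ iff $x\curlywedge y=x$), and $\xi,\delta\subseteq G\times G$, writing $x\downarrow y$ for $(x,y)\in\xi$. Assume $\xi$ is left regular ($(u,v)\in\xi\Rightarrow(xu,xv)\in\xi$), $\zeta\subseteq\xi$, $\delta$ is a left ideal ($(x,y)\in\delta\Rightarrow(ux,y)\in\delta$), and for all $x,y,z,u,v\in G$: $x(y\curlywedge z)=xy\curlywedge xz$; $x\leqslant y\wedge u\leqslant v\wedge y\downarrow v\Rightarrow u\downarrow x$; $x\downarrow y\Rightarrow(x\curlywedge y)u=xu\curlywedge yu$. Then $\xi$ is reflexive and symmetric, and $\zeta$ is stable on $(G,\cdot)$, i.e. $x\leqslant y$ and $u\leqslant v$ imply $xu\leqslant yv$ for all $x,y,u,v\in G$. *)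

Definition is_semigroup {G : Type} (mul : G -> G -> G) : Prop :=
  forall x y z, mul x (mul y z) = mul (mul x y) z.

Definition is_semilattice {G : Type} (meet : G -> G -> G) : Prop :=
  (forall x, meet x x = x) /\
  (forall x y, meet x y = meet y x) /\
  (forall x y z, meet x (meet y z) = meet (meet x y) z).

Definition sl_le {G : Type} (meet : G -> G -> G) (x y : G) : Prop :=
  meet x y = x.

Definition left_regular {G : Type} (mul : G -> G -> G) (xi : G -> G -> Prop) : Prop :=
  forall x u v, xi u v -> xi (mul x u) (mul x v).

Definition left_ideal_rel {G : Type} (mul : G -> G -> G) (delta : G -> G -> Prop) : Prop :=
  forall u x y, delta x y -> delta (mul u x) y.

Definition rel_sub {G : Type} (r s : G -> G -> Prop) : Prop :=
  forall x y, r x y -> s x y.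


(* Reflexivity of xi is the reflexivity of the semilattice order, and symmetry
   is the instance x = y, u = v of the hypothesis on xi. For stability, x <= y
   gives x xi y, so right distributivity over xi-related pairs yields
   xu <= yu; left distributivity yields yu <= yv; transitivity concludes. *)

Section SemilatticeOrder.

Context {G : Type} {meet : G -> G -> G}.

Lemma sl_le_refl : (forall x, meet x x = x) -> forall x, sl_le meet x x.
Proof. intros Hid x; apply Hid. Qed.

Lemma sl_le_trans :
  (forall x y z, meet x (meet y z) = meet (meet x y) z) ->
  forall x y z, sl_le meet x y -> sl_le meet y z -> sl_le meet x z.
Proof.
  unfold sl_le; intros Hassoc x y z Hxy Hyz.
  rewrite <- Hxy, <- Hassoc, Hyz; reflexivity.
Qed.

End SemilatticeOrder.

Section CompatibleRelation.

Context {G : Type} {mul meet : G -> G -> G} {xi : G -> G -> Prop}.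

Lemma rel_refl_of_sl_le :
  (forall x, meet x x = x) -> rel_sub (sl_le meet) xi -> forall x, xi x x.
Proof. intros Hid Hzeta x; apply Hzeta, sl_le_refl, Hid. Qed.

Lemma rel_sym_of_antitone :
  (forall x, meet x x = x) ->
  (forall x y u v, sl_le meet x y -> sl_le meet u v -> xi y v -> xi u x) ->
  forall x y, xi x y -> xi y x.
Proof.
  intros Hid Hanti x y; apply Hanti; apply sl_le_refl, Hid.
Qed.

Lemma sl_le_mull :
  (forall x y z, mul x (meet y z) = meet (mul x y) (mul x z)) ->
  forall x u v, sl_le meet u v -> sl_le meet (mul x u) (mul x v).
Proof.
  unfold sl_le; intros Hdistl x u v Huv.
  rewrite <- Hdistl, Huv; reflexivity.
Qed.

Lemma sl_le_mulr :
  rel_sub (sl_le meet) xi ->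
  (forall x y u, xi x y -> mul (meet x y) u = meet (mul x u) (mul y u)) ->
  forall x y u, sl_le meet x y -> sl_le meet (mul x u) (mul y u).
Proof.
  unfold sl_le; intros Hzeta Hdistr x y u Hxy.
  rewrite <- Hdistr, Hxy; [reflexivity | apply Hzeta; exact Hxy].
Qed.

End CompatibleRelation.

Theorem proposition3 (G : Type) (mul meet : G -> G -> G)
  (xi delta : G -> G -> Prop)
  (Hsg : is_semigroup mul)
  (Hsl : is_semilattice meet)
  (Hxi_reg : left_regular mul xi)
  (Hzeta_xi : rel_sub (sl_le meet) xi)
  (Hdelta : left_ideal_rel mul delta)
  (H1 : forall x y z, mul x (meet y z) = meet (mul x y) (mul x z))
  (H2 : forall x y u v, sl_le meet x y -> sl_le meet u v -> xi y v -> xi u x)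
  (H3 : forall x y u, xi x y -> mul (meet x y) u = meet (mul x u) (mul y u)) :
  (forall x, xi x x) /\
  (forall x y, xi x y -> xi y x) /\
  (forall x y u v, sl_le meet x y -> sl_le meet u v ->
     sl_le meet (mul x u) (mul y v)).
Proof.
  destruct Hsl as [Hid [_ Hassoc]].
  split; [exact (rel_refl_of_sl_le Hid Hzeta_xi) |].
  split; [exact (rel_sym_of_antitone Hid H2) |].
  intros x y u v Hxy Huv.
  apply sl_le_trans with (mul y u); [exact Hassoc | |].
  - exact (sl_le_mulr Hzeta_xi H3 _ _ u Hxy).
  - exact (sl_le_mull H1 y _ _ Huv).
Qed.
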